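(* Let $K$ be a finite simplicial complex, let $f\colon K\to\mathbb{R}$ be an injective filtration function, and let $\sigma_1,\sigma_2$ be two $n$-dimensional simplices of $K$. Assume that for some $\varepsilon>0$ we have $$f(\sigma_1)<f(\sigma_2)<f(\sigma_1)+2\varepsilon.$$ Then there exists an injective filtration function $g$ on $K$ such that $\|f-g\|_\infty\le\varepsilon$ and $g(\sigma_2)<g(\sigma_1)$.
   Context: A filtration function on a finite simplicial complex $K$ is a map $f\colon K\to\mathbb{R}$ such that $f(\sigma)\le f(\tau)$ whenever $\sigma$ is a face of $\tau$. For two functions $f,g\colon K\to\mathbb{R}$, $\|f-g\|_\infty=\max_{\sigma\in K}|f(\sigma)-g(\sigma)|$. *)

From mathcomp Require Import all_boot all_order all_algebra.
From mathcomp Require Import reals.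
Set Implicit Arguments. Unset Strict Implicit. Unset Printing Implicit Defensive.
Import Order.TTheory GRing.Theory Num.Theory.
Local Open Scope ring_scope.

Definition simplicial_complex (V : finType) (K : {set {set V}}) : Prop :=
  (forall s, s \in K -> s != set0) /\
  (forall s t : {set V}, s \in K -> t \subset s -> t != set0 -> t \in K).

Definition simplex_dim (V : finType) (s : {set V}) : nat := #|s|.-1.

(* A filtration function on K (only its values on K matter). *)
Definition filtration (R : realType) (V : finType) (K : {set {set V}})
  (f : {set V} -> R) : Prop :=
  forall s t : {set V}, s \in K -> t \in K -> s \subset t -> f s <= f t.

Definition injective_on_K (R : realType) (V : finType) (K : {set {set V}})
  (f : {set V} -> R) : Prop :=
  forall s t : {set V}, s \in K -> t \in K -> f s = f t -> s = t.

Definition sup_dist_le (R : realType) (V : finType) (K : {set {set V}})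
  (f g : {set V} -> R) (e : R) : Prop :=
  forall s, s \in K -> `|f s - g s| <= e.

From mathcomp Require Import all_boot all_order all_algebra.
From mathcomp Require Import reals.
From mathcomp Require Import lra zify.
Import Order.TTheory GRing.Theory Num.Theory.
Local Open Scope ring_scope.

(* Squeeze the values of f lying in [f s1, f s2] by a factor k < 1/2 towards
   the endpoints: faces of s2 are pulled down towards f s1, every other simplex
   is pushed up towards f s2, and values outside the interval stay put.  Faces
   of s2 form a down-closed family and the two squeezed ranges are disjoint, so
   the result is again an injective filtration.  As s1 has the dimension of s2
   but a different value, it is not a face of s2, hence it ends up above s2.
   Values move by at most (1 - k) (f s2 - f s1), which is <= eps for
   k = (f s2 - f s1) / (4 eps). *)

Section Squeeze.
Context {R : realFieldType}.
Implicit Types (a b k x y : R) (low : bool).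

Definition squeeze a b k low x : R :=
  if a <= x <= b then (if low then a + k * (x - a) else b - k * (b - x))
  else x.

Ltac squeeze_cases a b x :=
  rewrite /squeeze; case: (lerP a x); case: (lerP x b) => /=.

Lemma squeeze_le a b k low :
  0 <= k <= 1 -> {homo squeeze a b k low : x y / x <= y}.
Proof.
move=> /andP[k_ge0 k_le1] x y.
by squeeze_cases a b x; squeeze_cases a b y; case: low; move=> *; nra.
Qed.

Lemma squeeze_low_le_high a b k x y :
  0 <= k -> 2 * k <= 1 -> x <= y ->
  squeeze a b k true x <= squeeze a b k false y.
Proof.
move=> k_ge0 k_le_half.
by squeeze_cases a b x; squeeze_cases a b y; move=> *; nra.
Qed.

Lemma squeeze_low_lt_high a b k x y :
  a < b -> 0 <= k -> 2 * k < 1 -> a <= x <= b -> a <= y <= b ->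
  squeeze a b k true x < squeeze a b k false y.
Proof.
move=> lt_ab k_ge0 k_lt_half.
by rewrite /squeeze => /[dup] /andP[? ?] -> /[dup] /andP[? ?] ->; nra.
Qed.

Lemma squeeze_eq a b k low low' x y :
  a < b -> 0 < k -> 2 * k < 1 ->
  squeeze a b k low x = squeeze a b k low' y -> x = y.
Proof.
move=> lt_ab k_gt0 k_lt_half.
by squeeze_cases a b x; squeeze_cases a b y; case: low; case: low'; move=> *; nra.
Qed.

Lemma squeeze_dist a b k low x :
  a <= b -> 0 <= k <= 1 -> `|x - squeeze a b k low x| <= (1 - k) * (b - a).
Proof.
move=> le_ab /andP[k_ge0 k_le1].
by rewrite ler_norml; squeeze_cases a b x; case: low; move=> *; nra.
Qed.

End Squeeze.

Section SqueezeFiltration.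
Variables (R : realType) (V : finType) (K : {set {set V}}) (f : {set V} -> R).
Variables (L : pred {set V}) (a b k : R).
Hypothesis L_down : {in K &, forall s t : {set V}, s \subset t -> L t -> L s}.

Let g (t : {set V}) := squeeze a b k (L t) (f t).

Lemma filtration_squeeze :
  0 <= k -> 2 * k <= 1 -> filtration K f -> filtration K g.
Proof.
move=> k_ge0 k_le_half f_filt s t sK tK st; have le_fst := f_filt s t sK tK st.
have k01 : 0 <= k <= 1 by apply/andP; split; lra.
rewrite /g; have [Lt|_] := boolP (L t).
  by rewrite (L_down s t sK tK st Lt); apply: squeeze_le.
by case: (L s); [apply: squeeze_low_le_high | apply: squeeze_le].
Qed.

Lemma injective_on_K_squeeze :
  a < b -> 0 < k -> 2 * k < 1 -> injective_on_K K f -> injective_on_K K g.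
Proof.
move=> lt_ab k_gt0 k_lt_half f_inj s t sK tK eq_g.
by apply: f_inj => //; apply: squeeze_eq eq_g.
Qed.

Lemma sup_dist_squeeze eps :
  a <= b -> 0 <= k <= 1 -> (1 - k) * (b - a) <= eps -> sup_dist_le K f g eps.
Proof. by move=> le_ab k01 le_eps s _; apply: le_trans le_eps; apply: squeeze_dist. Qed.

End SqueezeFiltration.

Lemma squeeze_factor_spec {R : realFieldType} {d eps : R} :
  0 < d -> d < 2 * eps ->
  let k := d / (4 * eps) in [/\ 0 < k, 2 * k < 1 & (1 - k) * d <= eps].
Proof.
move=> d_gt0 lt_d_2eps k; have eps_gt0 : 0 < eps by lra.
have dE : d = 4 * eps * k by rewrite /k mulrC divfK // mulf_neq0 // gt_eqF.
rewrite dE in d_gt0 lt_d_2eps *; split; [nra | nra |].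
(* With d = 4 eps k, the last bound reads 0 <= eps (1 - 2 k)^2. *)
have := mulr_ge0 (ltW eps_gt0) (sqr_ge0 (1 - 2 * k)); nra.
Qed.

Lemma simplex_dim_subset_eq {V : finType} {s t : {set V}} :
  s != set0 -> simplex_dim s = simplex_dim t -> s \subset t -> s = t.
Proof.
rewrite -card_gt0 /simplex_dim => s_gt0 dim_st sub_st; apply/eqP.
rewrite eqEcard sub_st /=; have := subset_leq_card sub_st; lia.
Qed.

Theorem proposition2p1 (R : realType) (V : finType) (K : {set {set V}})
  (f : {set V} -> R) (n : nat) (s1 s2 : {set V}) (eps : R) :
  simplicial_complex K ->
  filtration K f -> injective_on_K K f ->
  s1 \in K -> s2 \in K -> simplex_dim s1 = n -> simplex_dim s2 = n ->
  0 < eps ->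
  f s1 < f s2 -> f s2 < f s1 + 2 * eps ->
  exists g : {set V} -> R,
    [/\ filtration K g, injective_on_K K g, sup_dist_le K f g eps
      & g s2 < g s1].
Proof.
move=> [K_nonempty _] f_filt f_inj s1K s2K dim1 dim2 _ lt12 lt2eps.
have not_sub12 : ~~ (s1 \subset s2).
  apply: contraTN lt12 => sub12.
  by rewrite (simplex_dim_subset_eq (K_nonempty _ s1K) _ sub12) ?ltxx // dim1 dim2.
have d_gt0 : 0 < f s2 - f s1 by rewrite subr_gt0.
have d_lt_2eps : f s2 - f s1 < 2 * eps by lra.
have [k_gt0 k_lt_half le_eps] := squeeze_factor_spec d_gt0 d_lt_2eps.
set k := _ / _ in k_gt0 k_lt_half le_eps.
pose L (t : {set V}) := t \subset s2.
have L_down : {in K &, forall s t : {set V}, s \subset t -> L t -> L s}.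
  by move=> s t _ _ /subset_trans; apply.
exists (fun t => squeeze (f s1) (f s2) k (L t) (f t)); split.
- by apply: filtration_squeeze => //; lra.
- exact: injective_on_K_squeeze.
- by apply: sup_dist_squeeze => //; [exact: ltW | apply/andP; split; lra].
- by rewrite /L subxx (negbTE not_sub12) squeeze_low_lt_high ?lexx ?(ltW lt12) //; lra.
Qed.
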